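(* In the setting below (disjoint parameter spaces), let $\widehat\Xi_n=\sum_{m\in\mathcal{M}_n}\widehat\gamma_{n,m}\widehat\Xi_{n,m}$ with $\widehat\Xi_{n,m}\in\operatorname{argmin}_{\Xi\in\mathbb{V}_{n,m}}\mathcal{E}(\Xi,\Pi_{n,m},q_n,Y^{(n)})$ and $\widehat\gamma_{n,m}\propto\alpha_{n,m}\exp(-\mathcal{E}(\widehat\Xi_{n,m},\Pi_{n,m},q_n,Y^{(n)}))$ normalized to sum to one, and let $\widehat\alpha_{n,m}:=\Pi_n(\theta\in\Theta_{n,m}\mid Y^{(n)})$. Then $$\Big(\sum_{m\in\mathcal{M}_n}|\widehat\gamma_{n,m}-\widehat\alpha_{n,m}|\Big)^2\le 2\,\mathrm{KL}\big(\widehat\Xi_n,\Pi_n(\cdot\mid Y^{(n)})\big).$$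
   Context: Setting: $\mathfrak{Y}_n$ is a measurable space with $\sigma$-finite measure $\mu_n$; $q_n:\Lambda_n\times\mathfrak{Y}_n\to[0,\infty)$ is a likelihood ($\int q_n(\lambda,\cdot)d\mu_n=1$); $\mathcal{M}_n$ is countable; $\{\Theta_{n,m}\}_{m\in\mathcal{M}_n}$ are pairwise disjoint; $T_n:\bigcup_m\Theta_{n,m}\to\Lambda_n$ is measurable; prior $\Pi_n=\sum_m\alpha_{n,m}\Pi_{n,m}$ with $(\alpha_{n,m})$ a probability vector and $\Pi_{n,m}$ a probability measure on $\Theta_{n,m}$; $\mathbb{V}_{n,m}$ are sets of probability measures on $\Theta_{n,m}$. Posterior: $\Pi_n(\mathcal{T}\mid Y^{(n)})\propto\int_{\mathcal{T}}q_n(T_n(\theta),Y^{(n)})d\Pi_n(\theta)$. Objective: $\mathcal{E}(\Xi,\Pi,q_n,Y^{(n)})=-\int\log q_n(T_n(\theta),Y^{(n)})d\Xi(\theta)+\mathrm{KL}(\Xi,\Pi)$. *)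

From HB Require Import structures.
From mathcomp Require Import all_boot all_order all_algebra.
From mathcomp Require Import all_classical all_reals all_analysis.
Set Implicit Arguments. Unset Strict Implicit. Unset Printing Implicit Defensive.
Import Order.TTheory GRing.Theory Num.Theory.
Local Open Scope classical_set_scope.
Local Open Scope ring_scope.
Local Open Scope ereal_scope.

(* Kullback-Leibler divergence KL(P, Q):
   if P << Q with a (nonnegative, measurable) density f = dP/dQ, then
   KL(P,Q) = \int f log f dQ  (with 0 log 0 = 0, mathcomp's ln 0 = 0);
   otherwise KL(P,Q) = +oo.  The density is Q-a.e. unique, so the choice
   of f does not matter. *)
Definition has_density d (T : measurableType d) (R : realType)
    (P Q : set T -> \bar R) (f : T -> R) : Prop :=
  [/\ measurable_fun setT f, (forall x, (0 <= f x)%R) &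
      forall A, measurable A -> P A = \int[Q]_(x in A) (f x)%:E].

Definition KL d (T : measurableType d) (R : realType)
    (P Q : set T -> \bar R) : \bar R :=
  match pselect (exists f, has_density P Q f) with
  | left h => let f := projT1 (cid h) in
              \int[Q]_x (f x * ln (f x))%:E
  | right _ => +oo
  end.

Definition elog (R : realType) (x : R) : \bar R :=
  if (0 < x)%R then (ln x)%:E else -oo.

Definition objE d (Th : measurableType d) (R : realType) (Lam Yt : Type)
    (T : Th -> Lam) (q : Lam -> Yt -> R) (y : Yt)
    (Xi Pi : set Th -> \bar R) : \bar R :=
  - (\int[Xi]_th elog (q (T th) y)) + KL Xi Pi.

From HB Require Import structures.
From mathcomp Require Import all_boot all_order all_algebra.
From mathcomp Require Import all_classical all_reals all_analysis.
From mathcomp Require Import ring lra.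
From mathcomp Require Import measurable_realfun.
Set Implicit Arguments. Unset Strict Implicit. Unset Printing Implicit Defensive.
Import Order.TTheory GRing.Theory Num.Theory.
Local Open Scope classical_set_scope.
Local Open Scope ring_scope.

(** Each mixture component [Xi_m] lives on its own cell [Theta_m], so the
    weights [gamma_m] and [alpha_hat_m] are the masses that [Xi] and the
    posterior give to the cells of a partition, and the claim is Pinsker's
    inequality for partitions.  If [f] is the density of [P] with respect to
    [Q], then [sum_m |P(Theta_m) - Q(Theta_m)| <= int |f - 1| dQ], and the
    elementary bound [3 (t - 1)^2 <= 2 (t + 2) (t ln t - t + 1)] combined
    with AM-GM gives [|t - 1| <= c/3 (t + 2) + (t ln t - t + 1)/(2c)] for
    every [c > 0].  Integrating yields [int |f - 1| dQ <= c + KL(P, Q)/(2c)],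
    and optimizing over [c] gives [(int |f - 1| dQ)^2 <= 2 KL(P, Q)]. *)

Section xlnx_inequalities.
Context {R : realType}.
Implicit Types (f : R -> R) (a b c k s t x : R).

Lemma ger0_derive1_le_pos f a b : 0 < a -> a <= b ->
  (forall x, 0 < x -> derivable f x 1) ->
  (forall x, a < x < b -> 0 <= f^`()%classic x) -> f a <= f b.
Proof.
move=> a0 ab df f'_ge0.
have dfab x : x \in `[a, b] -> derivable f x 1.
  by rewrite in_itv /= => /andP[ax _]; apply: df; lra.
apply: (@ger0_derive1_le_cc R f a b) => //.
- by move=> x /subset_itv_oo_cc /dfab.
- exact: derivable_within_continuous.
- by rewrite in_itv /= lexx ab.
- by rewrite in_itv /= lexx ab.
Qed.

Lemma ler0_derive1_le_pos f a b : 0 < a -> a <= b ->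
  (forall x, 0 < x -> derivable f x 1) ->
  (forall x, a < x < b -> f^`()%classic x <= 0) -> f b <= f a.
Proof.
move=> a0 ab df f'_le0; rewrite -lerN2.
apply: (@ger0_derive1_le_pos (- f)) => // [x x0|x xab].
  by apply: derivableN; exact: df.
rewrite derive1E deriveN ?oppr_ge0 -?derive1E; first exact: f'_le0.
by apply: df; lra.
Qed.

Lemma ln_ge_1_subV x : 0 < x -> 1 - x^-1 <= ln x.
Proof.
move=> x0; have := @le_ln1Dx R (x^-1 - 1).
rewrite [1 + _]addrC subrK lnV ?posrE // ltrBrDr addNr invr_gt0 => /(_ x0); lra.
Qed.

Lemma xlnx_sub_ge0 t : 0 <= t -> 0 <= t * ln t - t + 1.
Proof.
rewrite le0r => /predU1P[->|t0]; first by rewrite ln0 //; lra.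
have := ln_ge_1_subV t0; rewrite -(ler_pM2l t0) mulrBr mulr1 mulfV ?gt_eqF //.
lra.
Qed.

Let G t := (t + 1) * ln t - 2 * (t - 1).

Let G_derive x : 0 < x -> is_derive x 1 G (ln x + (x + 1) / x - 2).
Proof.
move=> x0; have := is_derive1_ln x0.
have -> : G = (@id R + cst 1) * @ln R - cst 2 * (@id R - cst 1).
  by apply/funext => t; rewrite /G.
move=> ?; apply: is_derive_eq => /=.
rewrite !scaler0 !subr0 !addr0.
by change ((x + 1) * x^-1 + ln x * 1 - 2 * 1 = ln x + (x + 1) / x - 2); ring.
Qed.

Let G_sign x : 0 < x -> (x <= 1 -> G x <= 0) /\ (1 <= x -> 0 <= G x).
Proof.
move=> x0.
have dG y : 0 < y -> derivable G y 1 by move=> /G_derive [].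
have G'_ge0 y : 0 < y -> 0 <= G^`()%classic y.
  move=> y0; rewrite derive1E; have [_ ->] := G_derive y0.
  have := ln_ge_1_subV y0.
  rewrite mulrDl mulfV ?gt_eqF // mul1r; lra.
have G1 : G 1 = 0 by rewrite /G ln1; ring.
split=> x1; rewrite -G1; apply: ger0_derive1_le_pos => // y /andP[ay _];
  apply: G'_ge0; lra.
Qed.

(* [F t = 2 (t + 2) (t ln t - t + 1) - 3 (t - 1)^2]; it vanishes at [1] and
   [F' = 4 G] has the sign of [t - 1]. *)
Let F t := 2 * t * (t + 2) * ln t - (t - 1) * (5 * t + 1).

Let F_derive x : 0 < x -> is_derive x 1 F (4 * G x).
Proof.
move=> x0; have := is_derive1_ln x0.
have -> : F = cst 2 * @id R * (@id R + cst 2) * @ln R -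
              (@id R - cst 1) * (cst 5 * @id R + cst 1).
  by apply/funext => t; rewrite /F.
move=> ?; apply: is_derive_eq => /=.
rewrite !scaler0 ?subr0 ?addr0 ?add0r.
change (2 * x * (x + 2) * x^-1 + ln x * (2 * x * 1 + (x + 2) * (2 * 1)) -
  ((x - 1) * (5 * 1) + (5 * x + 1) * 1) = 4 * G x).
by rewrite /G; field; rewrite gt_eqF.
Qed.

Lemma three_sqr_subr1_le t : 0 <= t ->
  3 * (t - 1) ^+ 2 <= 2 * (t + 2) * (t * ln t - t + 1).
Proof.
rewrite le0r => /predU1P[->|t0]; first by rewrite ln0 //; lra.
suff : 0 <= F t by rewrite /F; nra.
have dF y : 0 < y -> derivable F y 1 by move=> /F_derive [].
have F'E y : 0 < y -> F^`()%classic y = 4 * G y.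
  by move=> y0; rewrite derive1E; have [_ ->] := F_derive y0.
have F1 : F 1 = 0 by rewrite /F ln1; ring.
rewrite -F1; have [t1|t1] := leP t 1.
- apply: ler0_derive1_le_pos => // y /andP[ty y1]; have y0 : 0 < y by lra.
  by rewrite F'E // pmulr_rle0 //; apply: (G_sign y0).1; exact: ltW.
- apply: ger0_derive1_le_pos => //; first exact: ltW.
  move=> y /andP[y1 _]; have y0 : 0 < y by lra.
  by rewrite F'E // pmulr_rge0 //; apply: (G_sign y0).2; exact: ltW.
Qed.

Lemma abs_subr1_le_xlnx t c : 0 <= t -> 0 < c ->
  `|t - 1| <= c / 3 * (t + 2) + (2 * c)^-1 * (t * ln t - t + 1).
Proof.
move=> t0 c0; have := three_sqr_subr1_le t0; have := xlnx_sub_ge0 t0.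
set A := c / 3 * (t + 2); set B := (2 * c)^-1 * _.
have A0 : 0 <= A by rewrite /A; apply: mulr_ge0; [apply: divr_ge0|]; lra.
have -> : t * ln t - t + 1 = 2 * c * B by rewrite /B mulrA mulfV ?mul1r // gt_eqF ?mulr_gt0.
move=> B0 sqr_le.
have AM_GM : (t - 1) ^+ 2 <= (A + B) ^+ 2.
  have : 4 * A * B <= (A + B) ^+ 2 by have := sqr_ge0 (A - B); nra.
  apply: le_trans; move: sqr_le; rewrite /A; nra.
rewrite -ler_sqr ?nnegrE ?real_normK ?num_real //; nra.
Qed.

Lemma sqr_le_twice_of_forall_gt0 s k : 0 <= s ->
  (forall c, 0 < c -> s <= c + (2 * c)^-1 * k) -> s * s <= 2 * k.
Proof.
move=> s0 le_s.
have k0 : 0 <= k.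
  rewrite leNgt; apply/negP => k_lt0.
  pose c := - k / (4 - k).
  have c0 : 0 < c by apply: divr_gt0; lra.
  have c1 : c < 1 by rewrite ltr_pdivrMr; lra.
  have : c + (2 * c)^-1 * k = c - (4 - k) / 2 by rewrite /c; field; lra.
  by have := le_s c c0; lra.
have [->|s_gt0] := eqVneq s 0; first by rewrite mul0r; lra.
have s_pos : 0 < s by rewrite lt0r s_gt0.
have := le_s (s / 2); rewrite divr_gt0 // => /(_ isT).
have -> : (2 * (s / 2))^-1 * k = k / s by field; lra.
have : s * (k / s) = k by rewrite mulrC divfK ?gt_eqF.
nra.
Qed.

End xlnx_inequalities.

Local Open Scope ereal_scope.

Lemma integrable_bounded_below d (T : measurableType d) (R : realType)
    (mu : {finite_measure set T -> \bar R}) (h : T -> R) (b : R) :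
  measurable_fun setT h -> (forall x, (b <= h x)%R) ->
  \int[mu]_x (h x)%:E != +oo -> mu.-integrable setT (EFin \o h).
Proof.
move=> mh h_ge hoo.
have mEh : measurable_fun setT (fun x => (h x)%:E) by exact/measurable_EFinP.
have neg_lty : \int[mu]_x (EFin \o h)^\- x < +oo.
  apply: (@le_lt_trans _ _ (\int[mu]_x (cst `|b|%:E x))).
    apply: ge0_le_integral => //; first exact: measurable_funeneg.
    move=> x _; rewrite funenegE /= ge_max !lee_fin normr_ge0 andbT.
    by rewrite -normrN (le_trans _ (ler_norm _)) // lerN2.
  by rewrite integral_cst // lte_mul_pinfty // ?lee_fin // ltey_eq fin_num_measure.
apply/integrableP; split => //.
rewrite (eq_integral (fun x => (EFin \o h)^\+ x + (EFin \o h)^\- x)); last first.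
  by move=> x _; have /(congr1 (@^~ x)) := fune_abse (EFin \o h).
rewrite ge0_integralD //; [|exact: measurable_funepos|exact: measurable_funeneg].
rewrite lte_add_pinfty // ltey; apply: contra hoo => /eqP pos_oo.
by rewrite integralE pos_oo addye // gt_eqF // lteNr.
Qed.

Section density.
Context d (T : measurableType d) (R : realType) (P Q : probability T R).
Variable f : T -> R.
Hypothesis f_density : has_density P Q f.

Let mf : measurable_fun setT f. Proof. by case: f_density. Qed.
Let f_ge0 x : (0 <= f x)%R. Proof. by case: f_density. Qed.
Let PE A : measurable A -> P A = \int[Q]_(x in A) (f x)%:E.
Proof. by case: f_density => _ _; apply. Qed.

Let measurable_abs_sub1 : measurable_fun setT (fun x => (`|f x - 1|)%:E).
Proof. by apply/measurable_EFinP/measurableT_comp => //; exact: measurable_funB. Qed.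

Lemma integrable_density D : measurable D -> Q.-integrable D (EFin \o f).
Proof.
move=> mD; apply/integrableP; split; first exact/measurable_EFinP/measurable_funTS.
under eq_integral do rewrite /= ger0_norm //.
by rewrite -PE // (le_lt_trans (probability_le1 P mD)) ?ltry.
Qed.

Lemma integral_density : \int[Q]_x (f x)%:E = 1.
Proof. by rewrite -PE // probability_setT. Qed.

Lemma abse_measure_sub_le A : measurable A ->
  `|P A - Q A| <= \int[Q]_(x in A) (`|f x - 1|)%:E.
Proof.
move=> mA; have QE : Q A = \int[Q]_(x in A) (cst 1%R x)%:E.
  by rewrite (eq_integral (cst 1)) // integral_cst // mul1e.
rewrite PE // QE -integralB_EFin //; last 2 first.
- exact: integrable_density.
- exact: finite_measure_integrable_cst.
apply: le_trans (le_abse_integral _ _ _) _ => //.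
apply/measurable_EFinP/measurable_funB => //; exact: measurable_funTS.
Qed.

Lemma esum_abse_measure_sub_le (I : choiceType) (F : I -> set T) :
  (forall i, measurable (F i)) -> trivIset setT F ->
  \esum_(i in setT) `|P (F i) - Q (F i)| <= \int[Q]_x (`|f x - 1|)%:E.
Proof.
move=> mF tF; apply: ge_ereal_sup => /= _ [X [finX _] <-].
rewrite fsbig_finite //=.
apply: le_trans; first by apply: lee_sum => i _; exact: abse_measure_sub_le.
have mfs := finmap.fset_uniq (fset_set X).
rewrite -(integral_bigsetU_EFin Q (f := fun x => `|f x - 1|%R) mF mfs); last 2 first.
- exact: sub_trivIset tF.
- exact: measurable_funTS.
by apply: ge0_subset_integral => //; exact: bigsetU_measurable.
Qed.

Lemma integral_abs_sub1_le c : (0 < c)%R ->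
  \int[Q]_x (`|f x - 1|)%:E <=
    c%:E + ((2 * c)^-1)%:E * \int[Q]_x (f x * ln (f x))%:E.
Proof.
move=> c0; set a := ((2 * c)^-1)%R.
have a0 : (0 < a)%R by rewrite invr_gt0 mulr_gt0.
pose h x := (f x * ln (f x))%R.
have -> : \int[Q]_x (f x * ln (f x))%:E = \int[Q]_x (EFin \o h) x by [].
have [->|K_noo] := eqVneq (\int[Q]_x (EFin \o h) x) +oo.
  by rewrite gt0_muley ?lte_fin // addey // leey.
have mh : measurable_fun setT h.
  by apply: measurable_funM => //; apply: measurableT_comp => //; exact: measurable_ln.
have h_int : Q.-integrable setT (EFin \o h).
  apply: (@integrable_bounded_below _ _ _ _ _ (-1)%R) => // x.
  by have := xlnx_sub_ge0 (f_ge0 x); rewrite /h; have := f_ge0 x; lra.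
have f_int : Q.-integrable setT (EFin \o f) by exact: integrable_density.
apply: (@le_trans _ _ (\int[Q]_x
    ((c / 3 - a)%:E * (f x)%:E + a%:E * (h x)%:E + (2 * c / 3 + a)%:E))).
  apply: ge0_le_integral => //.
  - under eq_fun do rewrite -!EFinM -!EFinD.
    apply/measurable_EFinP/measurable_funD => //.
    by apply: measurable_funD; exact: measurable_funM.
  - move=> x _; rewrite -!EFinM -!EFinD lee_fin.
    have -> : ((c / 3 - a) * f x + a * h x + (2 * c / 3 + a) =
                c / 3 * (f x + 2) + a * (f x * ln (f x) - f x + 1))%R by rewrite /h; ring.
    exact: abs_subr1_le_xlnx.
rewrite integralD //; last 2 first.
- by apply: integrableD => //; exact: integrableZl.
- exact: finite_measure_integrable_cst.
rewrite integralD //; try exact: integrableZl.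
rewrite !integralZl // integral_density integral_cst //.
rewrite [X in _ + _ * X <= _](_ : _ = 1); last exact: probability_setT.
rewrite -(fineK (integrable_fin_num _ h_int)) // -!EFinM -!EFinD lee_fin.
lra.
Qed.

End density.

Lemma esqr_le_twice_of_forall_gt0 (R : realType) (s k : \bar R) : 0 <= s ->
  (forall c : R, (0 < c)%R -> s <= c%:E + ((2 * c)^-1)%:E * k) ->
  s * s <= 2%:E * k.
Proof.
move=> s0 le_s; have := le_s 1%R ltr01.
case: k le_s => [k||] le_s le_s1; last 2 first.
- by rewrite gt0_muley ?lte_fin // leey.
- move: le_s1; rewrite gt0_muleNy ?lte_fin ?invr_gt0 // addeNy leeNy_eq.
  by move=> /eqP s_Ny; move: s0; rewrite s_Ny.
have s_fin : s \is a fin_num.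
  by rewrite ge0_fin_numE // (le_lt_trans le_s1) // -EFinM -EFinD ltry.
rewrite -(fineK s_fin) -!EFinM lee_fin; apply: sqr_le_twice_of_forall_gt0.
  by rewrite fine_ge0.
by move=> c c0; rewrite -lee_fin fineK // EFinD EFinM; exact: le_s.
Qed.

Lemma KL_pinsker_partition d (T : measurableType d) (R : realType)
    (P Q : probability T R) (I : choiceType) (F : I -> set T) :
  (forall i, measurable (F i)) -> trivIset setT F ->
  (\esum_(i in setT) `|P (F i) - Q (F i)|) * (\esum_(i in setT) `|P (F i) - Q (F i)|)
    <= 2%:E * KL P Q.
Proof.
move=> mF tF; rewrite /KL; case: pselect => [f_ex|_]; last first.
  by rewrite gt0_muley ?lte_fin // leey.
have f_density := projT2 (cid f_ex).
apply: esqr_le_twice_of_forall_gt0; first by apply: esum_ge0 => i _.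
move=> c c0; apply: le_trans (integral_abs_sub1_le f_density c0).
exact: esum_abse_measure_sub_le.
Qed.

Lemma measure0_of_setC0_disjoint d (T : measurableType d) (R : realType)
    (mu : {measure set T -> \bar R}) (A B : set T) :
  measurable A -> measurable B -> mu (~` A) = 0 -> A `&` B = set0 -> mu B = 0.
Proof.
move=> mA mB muA0 AB0; apply/eqP; rewrite eq_le measure_ge0 andbT -muA0.
apply: le_measure; rewrite ?inE //; first exact: measurableC.
by move=> x Bx Ax; have : (A `&` B) x by []; rewrite AB0.
Qed.

Lemma probability_setC0 d (T : measurableType d) (R : realType)
    (P : probability T R) (A : set T) :
  measurable A -> P (~` A) = 0 -> P A = 1.
Proof.
move=> mA; rewrite probability_setC // -(fineK (fin_num_measure P _ mA)) -EFinB.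
by case=> /eqP; rewrite subr_eq0 => /eqP <-.
Qed.

Lemma esum_single (R : realType) (I : choiceType) (a : I -> \bar R) (j : I) :
  (forall i, 0 <= a i) -> (forall i, i <> j -> a i = 0) ->
  \esum_(i in setT) a i = a j.
Proof.
move=> a_ge0 aj; rewrite (esumID [set j]) // setTI esum_set1 //.
by rewrite esum1 ?adde0 // => i [_ /aj].
Qed.

Theorem proposition2p2
  (R : realType)
  (* observation space (Y_n, mu_n), parameter space Lambda_n, likelihood q_n *)
  (dY : measure_display) (Yt : measurableType dY) (mu : {measure set Yt -> \bar R})
  (dL : measure_display) (Lam : measurableType dL)
  (q : Lam -> Yt -> R)
  (mu_sfin : sigma_finite setT mu)
  (q_ge0 : forall l y, (0 <= q l y)%R)
  (q_meas : measurable_fun setT (fun p : Lam * Yt => q p.1 p.2))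
  (q_dens : forall l, \int[mu]_y (q l y)%:E = 1)
  (* disjoint parameter spaces Theta_{n,m}, m in a countable M_n, covering Theta *)
  (M : countType)
  (dT : measure_display) (Th : measurableType dT)
  (Theta : M -> set Th)
  (Theta_meas : forall m, measurable (Theta m))
  (Theta_disj : forall m m', m <> m' -> Theta m `&` Theta m' = set0)
  (Theta_cover : \bigcup_m Theta m = setT)
  (T : Th -> Lam) (T_meas : measurable_fun setT T)
  (* prior Pi_n = sum_m alpha_m Pi_{n,m} *)
  (alpha : M -> R) (alpha_ge0 : forall m, (0 <= alpha m)%R)
  (alpha_sum : \esum_(m in setT) (alpha m)%:E = 1)
  (Pim : M -> probability Th R)
  (Pim_supp : forall m, Pim m (~` Theta m) = 0)
  (Pi : probability Th R)
  (Pi_def : forall A, measurable A -> Pi A = \esum_(m in setT) (alpha m)%:E * Pim m A)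
  (* observed data Y^(n) and posterior Pi_n( . | Y^(n)) *)
  (y : Yt)
  (Zpost := \int[Pi]_th (q (T th) y)%:E)
  (Zpost_pos : 0 < Zpost) (Zpost_fin : Zpost < +oo)
  (post : probability Th R)
  (post_def : forall A, measurable A ->
     post A = (\int[Pi]_(th in A) (q (T th) y)%:E) * ((fine Zpost)^-1)%:E)
  (* variational families V_{n,m} of probability measures on Theta_{n,m} *)
  (V : M -> set (probability Th R))
  (V_supp : forall m Xi, V m Xi -> Xi (~` Theta m) = 0)
  (* Xi_hat_{n,m} in argmin_{Xi in V_{n,m}} E(Xi, Pi_{n,m}, q_n, Y^(n)) *)
  (Xim : M -> probability Th R)
  (Xim_in : forall m, V m (Xim m))
  (Xim_min : forall m Xi, V m Xi ->
     objE T q y (Xim m) (Pim m) <= objE T q y Xi (Pim m))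
  (* gamma_hat_{n,m} propto alpha_m exp(-E(Xi_hat_m, Pi_m, q_n, Y)), normalized *)
  (Zgam := \esum_(k in setT) (alpha k)%:E * expeR (- objE T q y (Xim k) (Pim k)))
  (Zgam_pos : 0 < Zgam) (Zgam_fin : Zgam < +oo)
  (gam : M -> R)
  (gam_def : forall m, (gam m)%:E =
     (alpha m)%:E * expeR (- objE T q y (Xim m) (Pim m)) * ((fine Zgam)^-1)%:E)
  (* Xi_hat_n = sum_m gamma_hat_{n,m} Xi_hat_{n,m} *)
  (Xi : probability Th R)
  (Xi_def : forall A, measurable A -> Xi A = \esum_(m in setT) (gam m)%:E * Xim m A) :
  let alpha_hat := fun m => fine (post (Theta m)) in
  let S := \esum_(m in setT) (`| gam m - alpha_hat m |)%:E in
  S * S <= 2%:E * KL Xi post.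
Proof.
cbv zeta.
have Zgam_gt0 : (0 < fine Zgam)%R by apply: fine_gt0; rewrite Zgam_pos Zgam_fin.
have gam_ge0 m : (0 <= gam m)%R.
  rewrite -lee_fin gam_def; apply: mule_ge0; last by rewrite lee_fin invr_ge0 ltW.
  by rewrite mule_ge0 ?lee_fin // expeR_ge0.
have Xim_Theta k m : Xim k (Theta m) = if k == m then 1 else 0.
  have Xim_supp := V_supp _ _ (Xim_in k).
  case: eqP => [<-|km]; first exact: probability_setC0.
  exact: measure0_of_setC0_disjoint Xim_supp (Theta_disj _ _ km).
have Xi_Theta m : Xi (Theta m) = (gam m)%:E.
  rewrite Xi_def // (esum_single (j := m)) => [|k|k /eqP/negPf km].
  - by rewrite Xim_Theta eqxx mule1.
  - by rewrite mule_ge0 ?lee_fin.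
  - by rewrite Xim_Theta km mule0.
have post_fin m : post (Theta m) \is a fin_num by rewrite fin_num_measure.
under eq_esum => m _ do rewrite -abse_EFin EFinB -Xi_Theta (fineK (post_fin m)).
apply: KL_pinsker_partition => //.
by apply/trivIsetP => i j _ _ /eqP; exact: Theta_disj.
Qed.
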